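(* Let $S$ be a closed connected oriented surface of genus $n\ge2$ and let $\chi\in H^1(S,\mathbb C)$ satisfy $\chi(H_1(S,\mathbb Z))=\mathbb Z+i\mathbb Z$ and $\omega(\chi)>0$. Then there is a symplectic basis $x_1,y_1,\dots,x_n,y_n$ of $H_1(S,\mathbb Z)$ such that $\mathrm{Im}(\overline{\chi(x_1)}\chi(y_1))>0$ and, for every $j=2,\dots,n$, $\chi(y_j)=0$ and $\chi(x_j)$ is a real number $\ge 0$.
   Context: A symplectic basis of $H_1(S,\mathbb Z)$ is a basis with intersection numbers $x_i\cdot y_j=\delta_{ij}$, $x_i\cdot x_j=y_i\cdot y_j=0$. $\omega(\chi):=\sum_{j=1}^n\mathrm{Im}(\overline{\chi(x_j)}\chi(y_j))$ for any symplectic basis (independent of the choice). *)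

From HB Require Import structures.
From mathcomp Require Import all_boot all_order all_algebra.
Set Implicit Arguments. Unset Strict Implicit. Unset Printing Implicit Defensive.
Import Order.TTheory GRing.Theory Num.Theory.
Local Open Scope ring_scope.

(* Model of H_1(S,Z) for a closed oriented surface of genus n:
   Z^n x Z^n, coordinates w.r.t. a fixed (reference) symplectic basis
   a_1..a_n, b_1..b_n with a_i . b_j = delta_ij. *)
Definition H1 (n : nat) := ('rV[int]_n * 'rV[int]_n)%type.

Definition inter (n : nat) (u v : H1 n) : int :=
  \sum_(i < n) (u.1 0 i * v.2 0 i - u.2 0 i * v.1 0 i).

Definition stdx (n : nat) (i : 'I_n) : H1 n := (delta_mx 0 i, 0).
Definition stdy (n : nat) (i : 'I_n) : H1 n := (0, delta_mx 0 i).

Definition symplectic_basis (n : nat) (x y : 'I_n -> H1 n) : Prop :=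
  [/\ (forall i j, inter (x i) (y j) = (i == j)%:R),
      (forall i j, inter (x i) (x j) = 0),
      (forall i j, inter (y i) (y j) = 0),
      (forall u : H1 n, exists a b : 'I_n -> int,
          u = \sum_(i < n) (x i *~ a i + y i *~ b i)) &
      (forall a b : 'I_n -> int,
          \sum_(i < n) (x i *~ a i + y i *~ b i) = 0 ->
          forall i, a i = 0 /\ b i = 0)].

(* a class chi in H^1(S,C) = Hom(H_1(S,Z), C) *)
Definition cohom_class (C : numClosedFieldType) (n : nat) (chi : H1 n -> C) : Prop :=
  forall u v, chi (u + v) = chi u + chi v.

(* omega(chi), computed in the reference symplectic basis
   (independent of the choice of symplectic basis) *)
Definition omega (C : numClosedFieldType) (n : nat) (chi : H1 n -> C) : C :=
  \sum_(i < n) 'Im ((chi (stdx i))^* * chi (stdy i)).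

(* Write chi = p + i q with p, q : H_1(S,Z) -> Z additive.  For an additive
   f : H_1(S,Z) -> Z, the symplectic transvections x_t += k y_t, y_t += k x_t and
   x_i += k x_j, y_j -= k y_i map symplectic bases to symplectic bases and act on
   the values of f as the elementary operations of the Euclidean algorithm.  On any
   set S of indices they thus produce a basis, unchanged outside S, in which f
   vanishes on every y_s and on every x_s but one, where it is nonnegative.  Doing
   this for q on all indices, then for p on the indices j <> 1 (which keeps q zero
   there), gives chi(y_j) = 0 and chi(x_j) = p(x_j) >= 0 for j >= 2.  Finally
   Im(conj chi(x_1) chi(y_1)) is the cup product sum_j p(x_j) q(y_j) - q(x_j) p(y_j),
   which is p evaluated at the Poincare dual of q, hence independent of the
   symplectic basis, and therefore equals omega(chi) > 0. *)

From HB Require Import structures.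
From mathcomp Require Import all_boot all_order all_algebra zify ring.
Import Order.TTheory GRing.Theory Num.Theory.
Set Implicit Arguments. Unset Strict Implicit. Unset Printing Implicit Defensive.
Local Open Scope ring_scope.

Lemma euclid_closed (A : int -> int -> Prop) :
  (forall a b k, A a b -> A (a + b * k) b) ->
  (forall a b k, A a b -> A a (b + a * k)) ->
  forall a b, A a b -> exists2 g, 0 <= g & A g 0.
Proof.
move=> hA hB.
have congrA a a' b b' : a = a' -> b = b' -> A a b -> A a' b' by move=> -> ->.
have swap a b : A a b -> A b (- a).
  move=> /(hA _ _ 1) /(hB _ _ (-1)) /(hA _ _ 1); apply: congrA; ring.
have base a : A a 0 -> exists2 g, 0 <= g & A g 0.
  case: (lerP 0 a) => [a_ge0 Aa|a_lt0 /swap/swap]; first by exists a.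
  by rewrite oppr0 => Aa; exists (- a); rewrite // oppr_ge0 ltW.
suff ind N a b : (absz b <= N)%N -> A a b -> exists2 g, 0 <= g & A g 0.
  by move=> a b; apply: (ind (absz b)).
elim: N a b => [|N IH] a b hb Aab.
  by move: hb; rewrite leqn0 absz_eq0 => /eqP b0; apply: (base a); rewrite -b0.
have [b0|b_neq0] := eqVneq b 0; first by apply: (base a); rewrite -b0.
have Ar : A (a %% b)%Z b.
  by move: (hA _ _ (- (a %/ b)%Z) Aab); apply: congrA => //; rewrite {1}(divz_eq a b); ring.
apply: (IH _ _ _ (swap _ _ Ar)).
have := ltz_mod a b_neq0; have := modz_ge0 a b_neq0; lia.
Qed.

Lemma stepwise_all (B : Type) (I : eqType) (A : B -> Prop) (P : B -> I -> Prop) (r : seq I) :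
  (forall b t, A b -> t \in r ->
     exists2 b', A b' & P b' t /\ forall u, u != t -> P b u -> P b' u) ->
  forall b, A b -> exists2 b', A b' & forall t, t \in r -> P b' t.
Proof.
elim: r => [|t r IH] step b Ab; first by exists b.
have [|b1 Ab1 Pb1] := IH _ b Ab.
  by move=> b' t' Ab' t'r; apply: step; rewrite // inE t'r orbT.
have [b2 Ab2 [Pb2 keep]] := step b1 t Ab1 (mem_head t r).
exists b2 => // u; rewrite inE; have [-> //|ut /= ur] := eqVneq u t.
exact/keep/Pb1.
Qed.

HB.instance Definition _ n := GRing.Zmodule.on (H1 n).

Lemma inter_is_zmod_morphism n (w : H1 n) : zmod_morphism (inter w).
Proof. by move=> u v; rewrite /inter -sumrB; apply: eq_bigr => i _; rewrite !mxE; ring. Qed.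

HB.instance Definition _ n (w : H1 n) :=
  GRing.isZmodMorphism.Build _ _ (@inter n w) (@inter_is_zmod_morphism n w).

Section Intersection.
Variable n : nat.
Implicit Types u v w : H1 n.

Lemma interC u v : inter u v = - inter v u.
Proof. by rewrite /inter -sumrN; apply: eq_bigr => i _; ring. Qed.

Lemma inter_self u : inter u u = 0.
Proof. by have := interC u u; lia. Qed.

Lemma interDr w u v : inter w (u + v) = inter w u + inter w v.
Proof. exact: raddfD. Qed.

Lemma interMzr w u k : inter w (u *~ k) = inter w u * k.
Proof. by rewrite raddfMz mulrzz. Qed.

Lemma interDl u v w : inter (u + v) w = inter u w + inter v w.
Proof. by rewrite interC interDr opprD -!interC. Qed.

Lemma interMzl u w k : inter (u *~ k) w = inter u w * k.
Proof. by rewrite interC interMzr [inter u w]interC mulNr. Qed.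

Lemma inter_stdx u j : inter u (stdx j) = - u.2 0 j.
Proof.
rewrite /inter (bigD1 j) //= big1 => [|i ij]; rewrite !mxE /= ?eqxx.
  by rewrite mulr0 mulr1 sub0r addr0.
by rewrite (negbTE ij) !mulr0 subr0.
Qed.

Lemma inter_stdy u j : inter u (stdy j) = u.1 0 j.
Proof.
rewrite /inter (bigD1 j) //= big1 => [|i ij]; rewrite !mxE /= ?eqxx.
  by rewrite mulr0 mulr1 subr0 addr0.
by rewrite (negbTE ij) !mulr0 subr0.
Qed.

Lemma inter_std_inj v w :
  (forall j, inter v (stdx j) = inter w (stdx j)) ->
  (forall j, inter v (stdy j) = inter w (stdy j)) -> v = w.
Proof.
case: v w => [v1 v2] [w1 w2] hx hy; congr (_, _); apply/rowP => j.
  by have := hy j; rewrite !inter_stdy.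
by have /eqP := hx j; rewrite !inter_stdx eqr_opp => /eqP.
Qed.

End Intersection.

Section SymplecticFamily.
Variables (n : nat) (x y : 'I_n -> H1 n).
Hypotheses (hxy : forall i j, inter (x i) (y j) = (i == j)%:R)
           (hxx : forall i j, inter (x i) (x j) = 0)
           (hyy : forall i j, inter (y i) (y j) = 0).

Lemma inter_yx i j : inter (y i) (x j) = - (i == j)%:R.
Proof. by rewrite interC hxy eq_sym. Qed.

Local Notation comb a b := (\sum_(i < n) (x i *~ a i + y i *~ b i)).

Lemma inter_x_comb j (a b : 'I_n -> int) : inter (x j) (comb a b) = b j.
Proof.
rewrite raddf_sum (bigD1 j) //= big1 => [|i ji]; rewrite raddfD !raddfMz /= hxx hxy.
  by rewrite eqxx mul0rz add0r mulrzz mul1r addr0.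
by rewrite eq_sym (negbTE ji) mulr0n !mul0rz addr0.
Qed.

Lemma inter_y_comb j (a b : 'I_n -> int) : inter (y j) (comb a b) = - a j.
Proof.
rewrite raddf_sum (bigD1 j) //= big1 => [|i ji]; rewrite raddfD !raddfMz /= hyy inter_yx.
  by rewrite eqxx mul0rz addr0 mulrzz mulN1r addr0.
by rewrite eq_sym (negbTE ji) mulr0n oppr0 !mul0rz addr0.
Qed.

Lemma comb_eq0 (a b : 'I_n -> int) : comb a b = 0 -> forall i, a i = 0 /\ b i = 0.
Proof.
move=> ab0 i; have := inter_y_comb i a b; have := inter_x_comb i a b.
by rewrite ab0 !raddf0 => <- /eqP; rewrite eq_sym oppr_eq0 => /eqP.
Qed.

End SymplecticFamily.

Lemma symplectic_basis_std n : symplectic_basis (@stdx n) (@stdy n).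
Proof.
have hxy i j : inter (@stdx n i) (stdy j) = (i == j)%:R.
  by rewrite inter_stdy mxE eq_sym.
have hxx i j : inter (@stdx n i) (stdx j) = 0 by rewrite inter_stdx mxE oppr0.
have hyy i j : inter (@stdy n i) (stdy j) = 0 by rewrite inter_stdy mxE.
split=> //; last exact: comb_eq0.
move=> u; exists (fun i => u.1 0 i), (fun i => u.2 0 i).
apply: inter_std_inj => j; rewrite [RHS]interC.
  by rewrite inter_x_comb // inter_stdx.
by rewrite inter_y_comb // inter_stdy opprK.
Qed.

Section DualVector.
Variable n : nat.
Implicit Types (x y : 'I_n -> H1 n) (p q : {additive H1 n -> int}).

Lemma additive_eq_on_basis (V : zmodType) (f g : {additive H1 n -> V}) x y :
  symplectic_basis x y -> (forall i, f (x i) = g (x i)) -> (forall i, f (y i) = g (y i)) ->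
  f =1 g.
Proof.
case=> _ _ _ span _ fgx fgy u; have [a [b ->]] := span u.
by rewrite !raddf_sum; apply: eq_bigr => i _; rewrite !raddfD !raddfMz fgx fgy.
Qed.

Definition dual_vector (q : H1 n -> int) x y : H1 n :=
  \sum_(i < n) (x i *~ q (y i) + y i *~ - q (x i)).

Lemma dual_vectorP q x y : symplectic_basis x y -> inter (dual_vector q x y) =1 q.
Proof.
move=> sb; have [hxy hxx hyy _ _] := sb.
apply: (additive_eq_on_basis (f := inter (dual_vector q x y)) sb) => i /=.
  by rewrite interC inter_x_comb // opprK.
by rewrite interC inter_y_comb // opprK.
Qed.

Lemma dual_vector_basis_invariant q x y x' y' :
  symplectic_basis x y -> symplectic_basis x' y' ->
  dual_vector q x y = dual_vector q x' y'.
Proof.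
move=> sb sb'; apply: inter_std_inj => j.
  exact: etrans (dual_vectorP _ sb _) (esym (dual_vectorP _ sb' _)).
exact: etrans (dual_vectorP _ sb _) (esym (dual_vectorP _ sb' _)).
Qed.

Definition cup (p q : H1 n -> int) x y : int :=
  \sum_(i < n) (p (x i) * q (y i) - q (x i) * p (y i)).

Lemma cupE p q x y : cup p q x y = p (dual_vector q x y).
Proof.
rewrite raddf_sum; apply: eq_bigr => i _.
by rewrite raddfD !raddfMz !mulrzz; ring.
Qed.

Lemma cup_basis_invariant p q x y x' y' :
  symplectic_basis x y -> symplectic_basis x' y' -> cup p q x y = cup p q x' y'.
Proof. by move=> sb sb'; rewrite !cupE (dual_vector_basis_invariant _ sb sb'). Qed.

End DualVector.

Section LocalChange.
Variable n : nat.
Implicit Types (S : pred 'I_n) (x y : 'I_n -> H1 n) (g : {additive H1 n -> int}).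

Definition vanish_on (g : H1 n -> int) S x y := forall s, S s -> g (x s) = 0 /\ g (y s) = 0.

(* The last clause says that the new S-part lies in the span of the old one. *)
Definition local_change S x y x' y' : Prop :=
  [/\ symplectic_basis x' y',
      forall t, ~~ S t -> x' t = x t /\ y' t = y t &
      forall g, vanish_on g S x y -> vanish_on g S x' y'].

Lemma local_change_refl S x y : symplectic_basis x y -> local_change S x y x y.
Proof. by []. Qed.

Lemma local_change_trans S x y x1 y1 x2 y2 :
  local_change S x y x1 y1 -> local_change S x1 y1 x2 y2 -> local_change S x y x2 y2.
Proof.
case=> _ fix1 van1 [sb2 fix2 van2]; split=> // [t St|g /van1/van2 //].
by have [<- <-] := fix1 t St; apply: fix2.
Qed.

Lemma local_change_sub S1 S2 x y x' y' : {subset S1 <= S2} ->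
  local_change S1 x y x' y' -> local_change S2 x y x' y'.
Proof.
move=> S12 [sb fix1 van1]; split=> // [t S2t|g gS2 s S2s].
  by apply: fix1; apply: contra S2t; apply: S12.
case S1s: (S1 s); last by have [-> ->] := fix1 s (negbT S1s); apply: gS2.
by apply: van1 => // s' /S12; apply: gS2.
Qed.

Lemma local_change_map S x y (phi : {additive H1 n -> H1 n}) (psi : H1 n -> H1 n) :
  cancel psi phi -> (forall u v, inter (phi u) (phi v) = inter u v) ->
  symplectic_basis x y ->
  (forall t, ~~ S t -> phi (x t) = x t /\ phi (y t) = y t) ->
  (forall g, vanish_on g S x y -> forall u, g (phi u) = g u) ->
  local_change S x y (phi \o x) (phi \o y).
Proof.
move=> psiK iso [hxy hxx hyy span _] fix1 van1; split; last 2 first.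
- exact: fix1.
- by move=> g gS s Ss; rewrite /= !van1; apply: gS.
have hxy' i j : inter (phi (x i)) (phi (y j)) = (i == j)%:R by rewrite iso.
have hxx' i j : inter (phi (x i)) (phi (x j)) = 0 by rewrite iso.
have hyy' i j : inter (phi (y i)) (phi (y j)) = 0 by rewrite iso.
split; [exact: hxy'|exact: hxx'|exact: hyy'| |exact: comb_eq0].
move=> w; have [a [b abw]] := span (psi w); exists a, b.
by rewrite -[w]psiK abw raddf_sum; apply: eq_bigr => i _; rewrite raddfD !raddfMz.
Qed.

End LocalChange.

Definition transvection n (v : H1 n) (k : int) (u : H1 n) : H1 n := u + v *~ (k * inter v u).

Definition pair_transvection n (a b : H1 n) (k : int) (u : H1 n) : H1 n :=
  u + a *~ (k * inter b u) + b *~ (k * inter a u).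

Lemma transvection_is_zmod_morphism n (v : H1 n) k : zmod_morphism (transvection v k).
Proof.
by move=> u w; rewrite /transvection raddfB mulrBr mulrzBr opprD addrACA.
Qed.

HB.instance Definition _ n (v : H1 n) k := GRing.isZmodMorphism.Build _ _
  (@transvection n v k) (@transvection_is_zmod_morphism n v k).

Lemma pair_transvection_is_zmod_morphism n (a b : H1 n) k :
  zmod_morphism (pair_transvection a b k).
Proof.
move=> u w; rewrite /pair_transvection !raddfB !mulrBr !mulrzBr /=.
by rewrite [in RHS]opprD [in RHS]opprD [RHS]addrACA [in RHS](addrACA u).
Qed.

HB.instance Definition _ n (a b : H1 n) k := GRing.isZmodMorphism.Build _ _
  (@pair_transvection n a b k) (@pair_transvection_is_zmod_morphism n a b k).

Section Transvections.
Variable n : nat.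
Implicit Types (u v w a b : H1 n) (k : int).

Lemma transvection_id v k u : inter v u = 0 -> transvection v k u = u.
Proof. by move=> vu0; rewrite /transvection vu0 mulr0 mulr0z addr0. Qed.

Lemma additive_transvection (g : {additive H1 n -> int}) v k u :
  g v = 0 -> g (transvection v k u) = g u.
Proof. by move=> gv; rewrite /transvection raddfD raddfMz gv mul0rz addr0. Qed.

Lemma transvectionK v k : cancel (transvection v k) (transvection v (- k)).
Proof.
move=> u; rewrite /transvection interDr interMzr inter_self mul0r addr0.
by rewrite mulNr mulrNz addrK.
Qed.

Lemma inter_transvection v k u w :
  inter (transvection v k u) (transvection v k w) = inter u w.
Proof.
rewrite /transvection !(interDl, interDr, interMzl, interMzr) inter_self.
rewrite [inter u v]interC; ring.
Qed.

Lemma pair_transvection_id a b k u :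
  inter a u = 0 -> inter b u = 0 -> pair_transvection a b k u = u.
Proof. by move=> au0 bu0; rewrite /pair_transvection au0 bu0 mulr0 !mulr0z !addr0. Qed.

Lemma additive_pair_transvection (g : {additive H1 n -> int}) a b k u :
  g a = 0 -> g b = 0 -> g (pair_transvection a b k u) = g u.
Proof.
by move=> ga gb; rewrite /pair_transvection !raddfD !raddfMz ga gb !mul0rz !addr0.
Qed.

Lemma inter_isotropic_comb a b u c d : inter a b = 0 ->
  inter a (u + a *~ c + b *~ d) = inter a u /\ inter b (u + a *~ c + b *~ d) = inter b u.
Proof.
move=> ab0; rewrite !interDr !interMzr !inter_self [inter b a]interC ab0.
by rewrite oppr0 !mul0r !addr0.
Qed.

Lemma inter_isotropic_comb2 a b u w c d c' d' : inter a b = 0 ->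
  inter (u + a *~ c + b *~ d) (w + a *~ c' + b *~ d') =
  inter u w + inter u a * c' + inter u b * d' + c * inter a w + d * inter b w.
Proof.
move=> ab0; rewrite !interDr !interMzr !interDl !interMzl !inter_self [inter b a]interC ab0.
ring.
Qed.

Lemma pair_transvectionK a b k : inter a b = 0 ->
  cancel (pair_transvection a b k) (pair_transvection a b (- k)).
Proof.
move=> ab0 u; set v := pair_transvection a b k u.
have [av bv] : inter a v = inter a u /\ inter b v = inter b u := inter_isotropic_comb _ _ _ ab0.
by rewrite {1}/pair_transvection av bv /v /pair_transvection !mulNr !mulrNz addrAC !addrK.
Qed.

Lemma inter_pair_transvection a b k u w : inter a b = 0 ->
  inter (pair_transvection a b k u) (pair_transvection a b k w) = inter u w.
Proof.
move=> ab0; rewrite inter_isotropic_comb2 // [inter u a]interC [inter u b]interC.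
ring.
Qed.

End Transvections.

Section ElementaryMoves.
Variables (n : nat) (S : pred 'I_n) (x y : 'I_n -> H1 n).
Hypothesis sb : symplectic_basis x y.

Let hxy : forall i j, inter (x i) (y j) = (i == j)%:R. Proof. by case: sb. Qed.
Let hxx : forall i j, inter (x i) (x j) = 0. Proof. by case: sb. Qed.
Let hyy : forall i j, inter (y i) (y j) = 0. Proof. by case: sb. Qed.
Let hyx i j : inter (y i) (x j) = - (i == j)%:R. Proof. exact: inter_yx. Qed.

Let neq_of_notin i t : S i -> ~~ S t -> (i == t) = false.
Proof. by move=> Si; apply: contraNF => /eqP <-. Qed.

Lemma local_change_transvection v k :
  (forall t, ~~ S t -> inter v (x t) = 0 /\ inter v (y t) = 0) ->
  (forall g : {additive H1 n -> int}, vanish_on g S x y -> g v = 0) ->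
  local_change S x y (transvection v k \o x) (transvection v k \o y).
Proof.
move=> vS gv; have TK : cancel (transvection v (- k)) (transvection v k).
  by move=> u; have := transvectionK v (- k) u; rewrite opprK.
apply: (local_change_map TK).
- exact: inter_transvection.
- exact: sb.
- by move=> t /vS [vx vy]; rewrite /= !transvection_id.
- by move=> g /gv gv0 u; apply: additive_transvection.
Qed.

Lemma shear_x_move t k : S t ->
  exists x' y', [/\ local_change S x y x' y', x' t = x t + y t *~ k & y' t = y t].
Proof.
move=> St; exists (transvection (y t) (- k) \o x), (transvection (y t) (- k) \o y); split.
- apply: local_change_transvection => [u Su|g /(_ t St) [] //].
  by rewrite hyy hyx (neq_of_notin St Su) oppr0.
- by rewrite /= /transvection hyx eqxx mulrNN mulr1.
- by rewrite /= transvection_id ?hyy.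
Qed.

Lemma shear_y_move t k : S t ->
  exists x' y', [/\ local_change S x y x' y', x' t = x t & y' t = y t + x t *~ k].
Proof.
move=> St; exists (transvection (x t) k \o x), (transvection (x t) k \o y); split.
- apply: local_change_transvection => [u Su|g /(_ t St) [] //].
  by rewrite hxx hxy (neq_of_notin St Su).
- by rewrite /= transvection_id ?hxx.
- by rewrite /= /transvection hxy eqxx mulr1.
Qed.

Lemma cross_move i j k : S i -> S j -> i != j ->
  exists x' y', [/\ local_change S x y x' y',
    x' i = x i + x j *~ k, x' j = x j, y' i = y i & y' j = y j - y i *~ k].
Proof.
move=> Si Sj ij; have ji : (j == i) = false by rewrite eq_sym (negbTE ij).
have xjyi : inter (x j) (y i) = 0 by rewrite hxy ji.
pose phi := pair_transvection (x j) (y i) (- k).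
exists (phi \o x), (phi \o y); split.
- apply: (local_change_map (pair_transvectionK k xjyi)) => //.
  + by move=> u v; apply: inter_pair_transvection.
  + move=> t St; have it := neq_of_notin Si St; have jt := neq_of_notin Sj St.
    by rewrite /= !pair_transvection_id // ?hxx ?hyy ?hxy ?hyx ?it ?jt ?oppr0.
  + move=> g gS u; have [gxj _] := gS j Sj; have [_ gyi] := gS i Si.
    exact: additive_pair_transvection.
- by rewrite /= /phi /pair_transvection hyx hxx eqxx mulrNN mulr1 mulr0 mulr0z addr0.
- by rewrite /= /phi pair_transvection_id ?hxx ?hyx ?(negbTE ij) ?oppr0.
- by rewrite /= /phi pair_transvection_id // ?hyy.
- by rewrite /= /phi /pair_transvection hyy hxy eqxx mulr0 mulr0z addr0 mulr1 mulrNz.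
Qed.

End ElementaryMoves.

Section Reduction.
Variables (n : nat) (f : {additive H1 n -> int}).
Local Notation basis := (('I_n -> H1 n) * ('I_n -> H1 n))%type.
Implicit Types (S : pred 'I_n) (x y : 'I_n -> H1 n).

Lemma normalize_index x y t : symplectic_basis x y ->
  exists x' y', [/\ local_change (pred1 t) x y x' y', f (y' t) = 0 & 0 <= f (x' t)].
Proof.
move=> sb.
pose A a b := exists x' y', [/\ local_change (pred1 t) x y x' y', f (x' t) = a & f (y' t) = b].
have [g g_ge0 [x' [y' [lc fx fy]]]] : exists2 g, 0 <= g & A g 0.
  apply: (@euclid_closed A _ _ (f (x t)) (f (y t))).
  - move=> a b k [x1 [y1 [lc1 <- <-]]]; have [sb1 _ _] := lc1.
    have [x2 [y2 [lc2 fx2 fy2]]] := shear_x_move (S := pred1 t) sb1 k (eqxx t).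
    exists x2, y2; split; first exact: local_change_trans lc2.
      by rewrite fx2 raddfD raddfMz mulrzz.
    by rewrite fy2.
  - move=> a b k [x1 [y1 [lc1 <- <-]]]; have [sb1 _ _] := lc1.
    have [x2 [y2 [lc2 fx2 fy2]]] := shear_y_move (S := pred1 t) sb1 k (eqxx t).
    exists x2, y2; split; first exact: local_change_trans lc2.
      by rewrite fx2.
    by rewrite fy2 raddfD raddfMz mulrzz.
  by exists x, y; split=> //; apply: local_change_refl.
by exists x', y'; rewrite fx fy.
Qed.

Lemma gather_index x y i t : symplectic_basis x y -> i != t ->
  f (y i) = 0 -> f (y t) = 0 ->
  exists x' y', [/\ local_change (pred2 i t) x y x' y',
    f (y' i) = 0, f (y' t) = 0, 0 <= f (x' i) & f (x' t) = 0].
Proof.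
move=> sb it fyi fyt; have ti : t != i by rewrite eq_sym.
have Si : pred2 i t i by rewrite /= eqxx.
have St : pred2 i t t by rewrite /= eqxx orbT.
pose A a b := exists x' y', [/\ local_change (pred2 i t) x y x' y',
  f (y' i) = 0, f (y' t) = 0, f (x' i) = a & f (x' t) = b].
have [g g_ge0 [x' [y' [lc fy'i fy't fx'i fx't]]]] : exists2 g, 0 <= g & A g 0.
  apply: (@euclid_closed A _ _ (f (x i)) (f (x t))).
  - move=> a b k [x1 [y1 [lc1 fy1i fy1t <- <-]]]; have [sb1 _ _] := lc1.
    have [x2 [y2 [lc2 ex2i ex2t ey2i ey2t]]] := cross_move sb1 k Si St it.
    exists x2, y2; split; first exact: local_change_trans lc2.
    - by rewrite ey2i.
    - by rewrite ey2t raddfB raddfMz fy1t fy1i mul0rz subr0.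
    - by rewrite ex2i raddfD raddfMz mulrzz.
    - by rewrite ex2t.
  - move=> a b k [x1 [y1 [lc1 fy1i fy1t <- <-]]]; have [sb1 _ _] := lc1.
    have [x2 [y2 [lc2 ex2t ex2i ey2t ey2i]]] := cross_move sb1 k St Si ti.
    exists x2, y2; split; first exact: local_change_trans lc2.
    - by rewrite ey2i raddfB raddfMz fy1t fy1i mul0rz subr0.
    - by rewrite ey2t.
    - by rewrite ex2i.
    - by rewrite ex2t raddfD raddfMz mulrzz.
  by exists x, y; split=> //; apply: local_change_refl.
by exists x', y'; rewrite fx'i fx't.
Qed.

Lemma normalize_all S x y : symplectic_basis x y ->
  exists x' y', local_change S x y x' y' /\ forall s, S s -> f (y' s) = 0 /\ 0 <= f (x' s).
Proof.
move=> sb; pose A (b : basis) := local_change S x y b.1 b.2.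
pose P (b : basis) s := f (b.2 s) = 0 /\ 0 <= f (b.1 s).
have step b t : A b -> t \in enum S ->
    exists2 b', A b' & P b' t /\ forall u, u != t -> P b u -> P b' u.
  case: b => x1 y1 /= lc1; rewrite mem_enum => St; have [sb1 _ _] := lc1.
  have [x2 [y2 [lc2 fy2 fx2]]] := normalize_index t sb1.
  exists (x2, y2); first by apply: local_change_trans lc1 (local_change_sub _ lc2) => s /eqP ->.
  split=> // u ut /=; have [_ keep _] := lc2.
  by rewrite /P /=; have [-> ->] := keep u ut.
have Axy : A (x, y) := local_change_refl S sb.
have [[x' y'] lc Pb] := stepwise_all step Axy.
by exists x', y'; split=> // s Ss; apply: Pb; rewrite mem_enum.
Qed.

Lemma gather_all S x y i : symplectic_basis x y -> S i ->
  (forall s, S s -> f (y s) = 0) -> 0 <= f (x i) ->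
  exists x' y', [/\ local_change S x y x' y', forall s, S s -> f (y' s) = 0,
    0 <= f (x' i) & forall s, S s -> s != i -> f (x' s) = 0].
Proof.
move=> sb Si fy fxi.
pose A (b : basis) :=
  [/\ local_change S x y b.1 b.2, forall s, S s -> f (b.2 s) = 0 & 0 <= f (b.1 i)].
pose P (b : basis) s := s != i -> f (b.1 s) = 0.
have step b t : A b -> t \in enum S ->
    exists2 b', A b' & P b' t /\ forall u, u != t -> P b u -> P b' u.
  case: b => x1 y1 /= [lc1 fy1 fx1i]; rewrite mem_enum => St; have [sb1 _ _] := lc1.
  have [<-|it] := eqVneq i t; first by exists (x1, y1); split=> //; rewrite /P eqxx.
  have [x2 [y2 [lc2 fy2i fy2t fx2i fx2t]]] := gather_index sb1 it (fy1 i Si) (fy1 t St).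
  have [_ keep _] := lc2.
  exists (x2, y2); first split.
  - by apply: local_change_trans lc1 (local_change_sub _ lc2) => s /orP [] /eqP ->.
  - move=> s Ss /=; have [->|si] := eqVneq s i => //; have [->|st] := eqVneq s t => //.
    have /keep [_ ->] : ~~ pred2 i t s by rewrite /= negb_or si st.
    exact: fy1.
  - exact: fx2i.
  split=> [_|u ut Pu ui /=]; first exact: fx2t.
  have /keep [-> _] : ~~ pred2 i t u by rewrite /= negb_or ui ut.
  exact: Pu ui.
have Axy : A (x, y) := And3 (local_change_refl S sb) fy fxi.
have [[x' y'] [lc fy' fx'i] Pb] := stepwise_all step Axy.
by exists x', y'; split=> // s Ss; apply: Pb; rewrite mem_enum.
Qed.

Lemma exists_adapted_basis S x y i : symplectic_basis x y -> S i ->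
  exists x' y', [/\ local_change S x y x' y', forall s, S s -> f (y' s) = 0,
    0 <= f (x' i) & forall s, S s -> s != i -> f (x' s) = 0].
Proof.
move=> sb Si; have [x1 [y1 [lc1 fxy1]]] := normalize_all S sb; have [sb1 _ _] := lc1.
have [x2 [y2 [lc2 fy2 fx2i fx2]]] :=
  gather_all sb1 Si (fun s Ss => (fxy1 s Ss).1) (fxy1 i Si).2.
by exists x2, y2; split; first exact: local_change_trans lc1 lc2.
Qed.

End Reduction.

Lemma integral_parts (C : numClosedFieldType) n (chi : H1 n -> C) :
  cohom_class chi -> (forall u, exists a b : int, chi u = a%:~R + 'i * b%:~R) ->
  exists p q : {additive H1 n -> int}, forall u, chi u = (p u)%:~R + 'i * (q u)%:~R.
Proof.
move=> chiD chiZ.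
have chiB u v : chi (u - v) = chi u - chi v.
  by apply: (addIr (chi v)); rewrite -chiD !subrK.
have pq u : exists pq : int * int, chi u == pq.1%:~R + 'i * pq.2%:~R.
  by have [a [b ->]] := chiZ u; exists (a, b).
pose p u := (xchoose (pq u)).1; pose q u := (xchoose (pq u)).2.
have chi_pq u : chi u = (p u)%:~R + 'i * (q u)%:~R := eqP (xchooseP (pq u)).
have Re_chi u : 'Re (chi u) = (p u)%:~R by rewrite chi_pq Re_rect ?realz.
have Im_chi u : 'Im (chi u) = (q u)%:~R by rewrite chi_pq Im_rect ?realz.
have pB : zmod_morphism p.
  by move=> u v; apply: (@intr_inj C); rewrite intrB -!Re_chi chiB raddfB.
have qB : zmod_morphism q.
  by move=> u v; apply: (@intr_inj C); rewrite intrB -!Im_chi chiB raddfB.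
pose pA : {additive H1 n -> int} := HB.pack p (GRing.isZmodMorphism.Build _ _ p pB).
pose qA : {additive H1 n -> int} := HB.pack q (GRing.isZmodMorphism.Build _ _ q qB).
by exists pA, qA.
Qed.

Lemma Im_conjM_rect (C : numClosedFieldType) (a b c d : int) :
  'Im ((a%:~R + 'i * b%:~R)^* * (c%:~R + 'i * d%:~R)) = (a * d - b * c)%:~R :> C.
Proof.
by rewrite ImM Re_conj Im_conj !Re_rect ?Im_rect ?realz // intrB !intrM; ring.
Qed.

Lemma omega_cup (C : numClosedFieldType) n (chi : H1 n -> C) (p q : H1 n -> int) :
  (forall u, chi u = (p u)%:~R + 'i * (q u)%:~R) ->
  omega chi = (cup p q (@stdx n) (@stdy n))%:~R.
Proof.
move=> chi_pq; rewrite /omega /cup rmorph_sum; apply: eq_bigr => i _.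
by rewrite !chi_pq Im_conjM_rect.
Qed.

Unset Implicit Arguments.

Theorem mainTheorem13 (C : numClosedFieldType) (n : nat) (hn : (2 <= n)%N)
  (chi : H1 n -> C) (hchi : cohom_class chi)
  (himg : forall z : C,
      (exists u : H1 n, chi u = z) <->
      (exists a b : int, z = a%:~R + 'i * b%:~R))
  (hom : 0 < omega chi) :
  exists x y : 'I_n -> H1 n,
    [/\ symplectic_basis x y,
        (forall i : 'I_n, nat_of_ord i = 0%N ->
           0 < 'Im ((chi (x i))^* * chi (y i))) &
        (forall j : 'I_n, (0 < nat_of_ord j)%N ->
           [/\ chi (y j) = 0, chi (x j) \is Num.real & 0 <= chi (x j)])].
Proof.
have [p [q chi_pq]] := integral_parts hchi (fun u => (himg (chi u)).1 (ex_intro _ u erefl)).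
pose i0 := Ordinal (ltnW hn); pose i1 := Ordinal hn.
pose S := [pred s : 'I_n | s != i0].
have [x1 [y1 [[sb1 _ _] qy1 _ qx1]]] :=
  exists_adapted_basis q (S := predT) (i := i0) (symplectic_basis_std n) isT.
have [x [y [[sb _ van] py px1 px]]] := exists_adapted_basis p (S := S) (i := i1) sb1 isT.
have qxy : vanish_on q S x y.
  by apply: van => s Ss; split; [exact: qx1 | exact: qy1].
exists x, y; split=> // [i i_eq0|j j_gt0].
  have -> : i = i0 by apply: val_inj.
  rewrite !chi_pq Im_conjM_rect ltr0z.
  have <- : cup p q x y = p (x i0) * q (y i0) - q (x i0) * p (y i0).
    rewrite /cup (bigD1 i0) //= big1 ?addr0 // => s si0.
    by have [-> ->] := qxy s si0; rewrite !mulr0 !mul0r subr0.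
  by rewrite (cup_basis_invariant _ _ sb (symplectic_basis_std n)) -(ltr0z C) -(omega_cup chi_pq).
have Sj : S j by rewrite /= -(inj_eq val_inj) /= -lt0n.
have [qxj qyj] := qxy j Sj.
have pxj : 0 <= p (x j) by have [->|ji1] := eqVneq j i1; [|rewrite px].
by rewrite !chi_pq qxj qyj py // !mulr0z mulr0 !addr0 realz ler0z.
Qed.
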